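(* Let $u,\gamma>0$, $s>0$, $\nu_0\in(0,1)$ and $\nu_1=1-\nu_0$, and let $F(y)=-y(1-y)[s+\gamma(1-y)]+u\nu_1(1-y)-u\nu_0y$. If $u<s$ or $\gamma<s$, then $F$ has exactly one root in $[0,1]$. *)

From Stdlib Require Import Reals.
Open Scope R_scope.

Definition F (u gamma s nu0 y : R) : R :=
  let nu1 := 1 - nu0 in
  - y * (1 - y) * (s + gamma * (1 - y)) + u * nu1 * (1 - y) - u * nu0 * y.

From Stdlib Require Import Reals Lra Psatz.
Open Scope R_scope.

(* F is the cubic -gamma y^3 + (s + 2 gamma) y^2 - (s + gamma + u) y + u nu1, with
   F(0) = u nu1 > 0 and F(1) = -u nu0 < 0, so the intermediate value theorem gives a
   root in [0,1].  For uniqueness write F(x) - F(y) = (x - y) Q(x,y), Q = [F_divdiff].  If a < b were two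
   roots, then b < 1 and Q(b,1) = (s - u) - (1 - b)(s - gamma b) < 0 because F(1) < 0;
   either hypothesis then forces gamma b < s.  But
   Q(a,b) = Q(b,1) - (1 - a)(s - gamma (a + b - 1)) <= Q(b,1) < 0, contradicting
   Q(a,b) = 0. *)

Section CubicF.

Variables u gamma s nu0 : R.

Definition F_divdiff (x y : R) : R :=
  - gamma * (x * x + x * y + y * y) + (s + 2 * gamma) * (x + y) - (s + gamma + u).

Lemma F_sub (x y : R) :
  F u gamma s nu0 x - F u gamma s nu0 y = (x - y) * F_divdiff x y.
Proof. unfold F, F_divdiff; ring. Qed.

Lemma F_divdiff_r1 (b : R) :
  F_divdiff b 1 = (s - u) - (1 - b) * (s - gamma * b).
Proof. unfold F_divdiff; ring. Qed.

Lemma F_divdiff_shift (a b : R) :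
  F_divdiff a b = F_divdiff b 1 - (1 - a) * (s - gamma * (a + b - 1)).
Proof. unfold F_divdiff; ring. Qed.

Lemma F_at0 : F u gamma s nu0 0 = u * (1 - nu0).
Proof. unfold F; ring. Qed.

Lemma F_at1 : F u gamma s nu0 1 = - (u * nu0).
Proof. unfold F; ring. Qed.

Hypothesis u_gt0 : 0 < u.
Hypothesis gamma_gt0 : 0 < gamma.
Hypothesis nu0_01 : 0 < nu0 < 1.

Lemma F_root_exists : exists y, 0 <= y <= 1 /\ F u gamma s nu0 y = 0.
Proof.
  assert (Fcont : continuity (F u gamma s nu0)) by (unfold F; reg).
  assert (sign_change : F u gamma s nu0 0 * F u gamma s nu0 1 <= 0).
  { rewrite F_at0, F_at1.
    assert (0 < u * (1 - nu0)) by nra.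
    assert (0 < u * nu0) by nra.
    nra. }
  destruct (IVT_cor _ 0 1 Fcont ltac:(lra) sign_change) as [y Hy].
  now exists y.
Qed.

Lemma F_root_lt1 (b : R) : F u gamma s nu0 b = 0 -> b <> 1.
Proof.
  intros Fb ->; rewrite F_at1 in Fb.
  assert (0 < u * nu0) by nra.
  lra.
Qed.

Lemma F_divdiff_r1_neg (b : R) :
  b < 1 -> F u gamma s nu0 b = 0 -> F_divdiff b 1 < 0.
Proof.
  intros b_lt1 Fb.
  assert (slope : (b - 1) * F_divdiff b 1 = u * nu0).
  { rewrite <- F_sub, Fb, F_at1; ring. }
  assert (0 < u * nu0) by nra.
  nra.
Qed.

Hypothesis u_or_gamma_lt_s : u < s \/ gamma < s.

Lemma gamma_root_lt_s (b : R) :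
  0 <= b < 1 -> F u gamma s nu0 b = 0 -> gamma * b < s.
Proof.
  intros b01 Fb.
  pose proof (F_divdiff_r1_neg b (proj2 b01) Fb) as Qb1.
  rewrite F_divdiff_r1 in Qb1.
  destruct u_or_gamma_lt_s; nra.
Qed.

Lemma F_roots_lt_absurd (a b : R) :
  0 <= a -> a < b -> b <= 1 ->
  F u gamma s nu0 a = 0 -> F u gamma s nu0 b = 0 -> False.
Proof.
  intros a_ge0 ab b_le1 Fa Fb.
  assert (b_lt1 : b < 1) by (pose proof (F_root_lt1 b Fb); lra).
  assert (Qab : F_divdiff a b = 0).
  { assert (prod0 : (a - b) * F_divdiff a b = 0) by (rewrite <- F_sub, Fa, Fb; ring).
    destruct (Rmult_integral _ _ prod0); [lra | assumption]. }
  pose proof (F_divdiff_r1_neg b b_lt1 Fb) as Qb1.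
  pose proof (gamma_root_lt_s b ltac:(lra) Fb).
  assert (0 < (1 - a) * (s - gamma * (a + b - 1))) by (apply Rmult_lt_0_compat; nra).
  rewrite F_divdiff_shift in Qab.
  lra.
Qed.

Lemma F_roots01_eq (a b : R) :
  0 <= a <= 1 -> 0 <= b <= 1 ->
  F u gamma s nu0 a = 0 -> F u gamma s nu0 b = 0 -> a = b.
Proof.
  intros Ha Hb Fa Fb.
  destruct (Rtotal_order a b) as [ab | [ab | ba]]; [exfalso | exact ab | exfalso].
  - exact (F_roots_lt_absurd a b ltac:(lra) ab ltac:(lra) Fa Fb).
  - exact (F_roots_lt_absurd b a ltac:(lra) ba ltac:(lra) Fb Fa).
Qed.

End CubicF.

Theorem proposition3p2 (u gamma s nu0 : R) :
  0 < u -> 0 < gamma -> 0 < s -> 0 < nu0 < 1 ->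
  (u < s \/ gamma < s) ->
  exists! y : R, 0 <= y <= 1 /\ F u gamma s nu0 y = 0.
Proof.
  (* [0 < s] is implied by the last hypothesis. *)
  intros u_gt0 gamma_gt0 _ nu0_01 u_or_gamma_lt_s.
  destruct (F_root_exists u gamma s nu0 u_gt0 nu0_01) as [y [y01 Fy]].
  exists y; split; [now split |].
  intros z [z01 Fz].
  exact (F_roots01_eq u gamma s nu0 u_gt0 gamma_gt0 nu0_01 u_or_gamma_lt_s
           y z y01 z01 Fy Fz).
Qed.
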